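(* Let $K,L$ be compact Hausdorff spaces and suppose there are continuous maps $e\colon L\to K$ and $r\colon K\to L$ with $r\circ e=\mathrm{Id}_L$. If $C(K)$ has the ball fixed point property, then $C(L)$ has the ball fixed point property.
   Context: $C(K)$ is the real Banach space of continuous functions on compact $K$ with the sup norm. A real Banach space $X$ has the ball fixed point property (BFPP) if every nonexpansive map $T\colon B_X\to B_X$ (i.e. $\|Tx-Ty\|\le\|x-y\|$) has a fixed point, where $B_X$ is the closed unit ball. *)

From HB Require Import structures.
From mathcomp Require Import all_boot all_order all_algebra.
From mathcomp Require Import all_classical all_reals all_analysis.
Set Implicit Arguments. Unset Strict Implicit. Unset Printing Implicit Defensive.
Import Order.TTheory GRing.Theory Num.Theory.
Import numFieldNormedType.Exports.
Local Open Scope classical_set_scope.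
Local Open Scope ring_scope.

Definition in_CK {R : realType} {K : topologicalType} (f : K -> R) : Prop :=
  continuous f.

(* sup norm ||f||_oo = sup_{x in K} |f x| (sup of empty set is 0 in mathcomp) *)
Definition supnorm {R : realType} {K : topologicalType} (f : K -> R) : R :=
  sup (range (fun x => `|f x|)).

Definition in_unit_ball {R : realType} {K : topologicalType} (f : K -> R) : Prop :=
  in_CK f /\ supnorm f <= 1.

Definition CK_BFPP (R : realType) (K : topologicalType) : Prop :=
  forall T : (K -> R) -> (K -> R),
    (forall f, in_unit_ball f -> in_unit_ball (T f)) ->
    (forall f g, in_unit_ball f -> in_unit_ball g ->
        supnorm (T f - T g) <= supnorm (f - g)) ->
    exists2 f, in_unit_ball f & T f = f.

From HB Require Import structures.
From mathcomp Require Import all_boot all_order all_algebra.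
From mathcomp Require Import all_classical all_reals all_analysis.
Import Order.TTheory GRing.Theory Num.Theory.
Import numFieldNormedType.Exports.
Local Open Scope classical_set_scope.
Local Open Scope ring_scope.

(* Since [r \o e = id], precomposition with [e] maps the ball of C(K) onto the
   ball of C(L) without increasing norms, and precomposition with the
   surjection [r] embeds the ball of C(L) isometrically into that of C(K).
   A nonexpansive self-map T of the ball of C(L) thus conjugates to the
   nonexpansive self-map f |-> T (f \o e) \o r of the ball of C(K), whose
   fixed point f gives the fixed point f \o e of T. *)

Section SupNorm.
Context {R : realType}.

Lemma compact_continuous_norm_ubound (K : topologicalType) (f : K -> R) :
  compact [set: K] -> continuous f -> has_ubound (range (fun x => `|f x|)).
Proof.
move=> cK cf.
have cnf : continuous (fun x => `|f x|).
  by move=> x; apply: continuous_comp; [exact: cf | exact: norm_continuous].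
have [M [_ HM]] := compact_bounded
  (continuous_compact (continuous_subspaceT cnf) cK).
exists (M + 1) => _ [x _ <-].
have M_lt : M < M + 1 by rewrite ltrDl.
have := HM (M + 1) M_lt `|f x| (ex_intro2 _ _ x I erefl).
by rewrite /= normr_id.
Qed.

Lemma supnorm_ge0 (K : topologicalType) (f : K -> R) :
  has_ubound (range (fun x => `|f x|)) -> 0 <= supnorm f.
Proof.
move=> bf; have [[k _]|noK] := pselect (exists k : K, True).
  by apply: le_trans (normr_ge0 (f k)) _; apply: ub_le_sup => //; exists k.
rewrite /supnorm; suff -> : range (fun x => `|f x|) = set0 by rewrite sup0.
by apply/seteqP; split => // y [x _ _]; apply: noK; exists x.
Qed.

Lemma supnorm_comp_le (K L : topologicalType) (e : L -> K) (f : K -> R) :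
  has_ubound (range (fun x => `|f x|)) -> supnorm (f \o e) <= supnorm f.
Proof.
move=> bf; have [[l _]|noL] := pselect (exists l : L, True).
  apply: ge_sup; first by exists `|f (e l)|, l.
  by move=> _ [x _ <-]; apply: ub_le_sup => //; exists (e x).
rewrite {1}/supnorm; suff -> : range (fun x => `|(f \o e) x|) = set0.
  by rewrite sup0; exact: supnorm_ge0.
by apply/seteqP; split => // y [x _ _]; apply: noL; exists x.
Qed.

Lemma supnorm_comp_cancel {K L : topologicalType} {e : L -> K} {r : K -> L}
    (g : L -> R) :
  cancel e r -> supnorm (g \o r) = supnorm g.
Proof.
move=> eK; rewrite /supnorm; congr sup.
apply/seteqP; split => _ [x _ <-]; first by exists (r x).
by exists (e x) => //=; rewrite eK.
Qed.

Lemma in_unit_ball_comp {K L : topologicalType} (e : L -> K) (f : K -> R) :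
  compact [set: K] -> continuous e -> in_unit_ball f -> in_unit_ball (f \o e).
Proof.
move=> cK ce [cf nf]; split.
  by move=> x; apply: continuous_comp; [exact: ce | exact: cf].
apply: le_trans nf; apply: supnorm_comp_le.
exact: compact_continuous_norm_ubound.
Qed.

Lemma in_unit_ball_comp_cancel {K L : topologicalType} {e : L -> K}
    {r : K -> L} (g : L -> R) :
  cancel e r -> continuous r -> in_unit_ball g -> in_unit_ball (g \o r).
Proof.
move=> eK cr [cg ng]; split.
  by move=> x; apply: continuous_comp; [exact: cr | exact: cg].
by rewrite (supnorm_comp_cancel _ eK).
Qed.

End SupNorm.

Theorem mainTheorem12 (R : realType) (K L : topologicalType)
  (hK : hausdorff_space K) (cK : compact [set: K])
  (hL : hausdorff_space L) (cL : compact [set: L])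
  (e : L -> K) (r : K -> L) (ce : continuous e) (cr : continuous r)
  (re : r \o e = id) :
  CK_BFPP R K -> CK_BFPP R L.
Proof.
move=> BFPP_K T T_ball T_nonexp.
have eK : cancel e r by move=> x; exact: (congr1 (fun h => h x) re).
have ball_e := fun f : K -> R => in_unit_ball_comp e f cK ce.
have ball_r := fun g : L -> R => in_unit_ball_comp_cancel g eK cr.
pose S (f : K -> R) := T (f \o e) \o r.
have S_ball f : in_unit_ball f -> in_unit_ball (S f).
  by move=> hf; apply/ball_r/T_ball/ball_e.
have S_nonexp f g : in_unit_ball f -> in_unit_ball g ->
    supnorm (S f - S g) <= supnorm (f - g).
  move=> hf hg.
  have -> : S f - S g = (T (f \o e) - T (g \o e)) \o r by apply/funext.
  rewrite (supnorm_comp_cancel _ eK).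
  apply: le_trans (T_nonexp _ _ (ball_e _ hf) (ball_e _ hg)) _.
  have -> : (f \o e) - (g \o e) = (f - g) \o e by apply/funext.
  apply/supnorm_comp_le/compact_continuous_norm_ubound => //.
  by move=> x; apply: continuousB; [exact: hf.1 | exact: hg.1].
have [f hf Sf] := BFPP_K S S_ball S_nonexp.
exists (f \o e); first exact: ball_e.
by rewrite -[in RHS]Sf /S -compA re.
Qed.
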